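(* Let $L$ be a finite-dimensional Lie algebra over a field $F$. If $L$ has a supersolvable maximal subalgebra $M$ with $\eta(L:M)=1$ and $N(L)\not\subseteq M$, then $L$ is supersolvable.
   Context: $N(L)$ denotes the nilradical of $L$ (its largest nilpotent ideal). A Lie algebra is supersolvable if it has a chain of ideals $0=L_0\subset L_1\subset\cdots\subset L_n$ equal to the whole algebra, with successive quotients one-dimensional. For a nonzero subalgebra $X$ of $L$, the strict core $k(X)$ is the sum of all ideals of $L$ that are proper subalgebras of $X$ (it is $0$ if there are none). For a maximal subalgebra $M$, a subalgebra $C$ is a completion of $M$ if $C\not\subseteq M$ but every proper subalgebra of $C$ that is an ideal of $L$ is contained in $M$; an ideal completion is a completion that is an ideal of $L$. The ideal index $\eta(L:M)$ is $\dim(C/k(C))$ for any ideal completion $C$ of $M$ (independent of the choice of $C$). *)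

(* Finite-dimensional Lie algebras over a field F are modelled
   as a vectType F (finite-dimensional F-vector space) together with a bracket
   satisfying the Lie algebra axioms (see [is_lie_bracket]). *)
From HB Require Import structures.
From mathcomp Require Import all_boot all_order all_algebra.
Set Implicit Arguments. Unset Strict Implicit. Unset Printing Implicit Defensive.
Import GRing.Theory.
Local Open Scope ring_scope.
Local Open Scope vspace_scope.

Section Lie.
Variables (F : fieldType) (L : vectType F) (br : L -> L -> L).

Definition is_lie_bracket : Prop :=
  [/\ (forall (a : F) (x y z : L), (br (a *: x + y) z = a *: br x z + br y z)%R),
      (forall (a : F) (x y z : L), (br z (a *: x + y) = a *: br z x + br z y)%R),
      (forall x : L, br x x = 0%R)
    & (forall x y z : L, (br x (br y z) + br y (br z x) + br z (br x y) = 0)%R)].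

(* [U, V] : the subspace spanned by all brackets [u, v], u in U, v in V
   (by bilinearity it is spanned by brackets of basis vectors). *)
Definition lie_prod (U V : {vspace L}) : {vspace L} :=
  << [seq br u v | u <- (vbasis U : seq L), v <- (vbasis V : seq L)] >>%VS.

Definition is_subalgebra (U : {vspace L}) : Prop :=
  forall u v, u \in U -> v \in U -> br u v \in U.

Definition is_ideal_in (S I : {vspace L}) : Prop :=
  (I <= S)%VS /\ forall x u, x \in S -> u \in I -> br x u \in I.

Definition is_ideal (I : {vspace L}) : Prop := is_ideal_in fullv I.

(* lower central series of U: U^1 = U, U^(k+1) = [U, U^k] *)
Fixpoint lcs (U : {vspace L}) (k : nat) : {vspace L} :=
  match k with
  | 0 => U
  | k'.+1 => lie_prod U (lcs U k')
  end.

Definition is_nilpotent (U : {vspace L}) : Prop := exists k, lcs U k = 0%VS.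

Definition is_nilradical (N : {vspace L}) : Prop :=
  [/\ is_ideal N, is_nilpotent N &
      forall I, is_ideal I -> is_nilpotent I -> (I <= N)%VS].

Definition supersolvable_sub (S : {vspace L}) : Prop :=
  exists (n : nat) (f : nat -> {vspace L}),
    [/\ f 0%N = 0%VS, f n = S,
        forall i, (i <= n)%N -> is_ideal_in S (f i)
      & forall i, (i < n)%N ->
          (f i <= f i.+1)%VS /\ \dim (f i.+1) = (\dim (f i)).+1].

Definition supersolvable : Prop := supersolvable_sub fullv.

Definition is_maximal_subalgebra (M : {vspace L}) : Prop :=
  [/\ is_subalgebra M, M != fullv &
      forall U, is_subalgebra U -> (M <= U)%VS -> U = M \/ U = fullv].

(* K = k(X): the sum of all ideals of L that are proper subalgebras of X,
   characterised as the least subspace containing all of them (0 if none). *)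
Definition is_strict_core (X K : {vspace L}) : Prop :=
  (forall I, is_ideal I -> (I <= X)%VS -> I != X -> (I <= K)%VS) /\
  (forall V : {vspace L},
     (forall I, is_ideal I -> (I <= X)%VS -> I != X -> (I <= V)%VS) ->
     (K <= V)%VS).

Definition is_completion (M C : {vspace L}) : Prop :=
  [/\ is_subalgebra C, ~~ (C <= M)%VS &
      forall I, is_subalgebra I -> (I <= C)%VS -> I != C -> is_ideal I ->
        (I <= M)%VS].

Definition is_ideal_completion (M C : {vspace L}) : Prop :=
  is_completion M C /\ is_ideal C.

(* eta(L:M) = dim (C / k(C)) for an ideal completion C of M
   (independent of C); k(C) <= C, so dim (C/k(C)) = dim C - dim k(C). *)
Definition ideal_index_is (M : {vspace L}) (e : nat) : Prop :=
  exists C K, [/\ is_ideal_completion M C, is_strict_core C K &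
                  (\dim C - \dim K)%N = e].

End Lie.

(* Since [N] is a nilpotent ideal not contained in the maximal subalgebra [M],
   [L = M + N].  For ideals [B < T] with [T <= M + B], a minimal ideal [A] with
   [B < A <= T] satisfies [[N, A] <= B] (otherwise [A = [N, A] + B], which the
   nilpotency of [N] forbids), so the ideals [(M_i :&: A) + B] cut out by a
   supersolvable flag [(M_i)] of [M] climb from [B] to [A] one dimension at a
   time; this refines [0 <= T] into a chain of ideals with one-dimensional
   steps.  With [C] an ideal completion of [M] and [K = k(C)] of codimension 1
   in [C], apply this to [0 <= K] and [C <= L]; as [K <= M <= M + 0] and
   [L = M + C], the two chains join into a chief series of [L]. *)
From HB Require Import structures.
From mathcomp Require Import all_boot all_order all_algebra.
From Stdlib Require Import Classical.
From mathcomp Require Import zify.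
Set Implicit Arguments. Unset Strict Implicit. Unset Printing Implicit Defensive.
Import GRing.Theory.
Local Open Scope vspace_scope.
Local Open Scope ring_scope.

Lemma nat_step_up (d : nat -> nat) (n m : nat) :
  (d 0 <= n < d m)%N -> (forall i, i < m -> d i.+1 <= (d i).+1)%N ->
  exists2 i, (i < m)%N & d i.+1 = n.+1.
Proof.
move=> /andP [d0n ndm] dS.
have exP : exists j, (n < d j)%N by exists m.
case: (ex_minnP exP) => [[|i] ndi1 jmin]; first by rewrite ltnNge d0n in ndi1.
have im : (i < m)%N by apply: jmin.
have din : (d i <= n)%N by rewrite leqNgt; apply/negP => /jmin; lia.
by exists i => //; have := dS i im; lia.
Qed.

Lemma dimv_cap_add_le (F : fieldType) (L : vectType F) (U U' A B : {vspace L}) :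
  (U <= U')%VS ->
  (\dim (U' :&: A + B)%VS <= \dim (U :&: A + B)%VS + (\dim U' - \dim U))%N.
Proof.
move=> sUU'.
set a := (U :&: A)%VS; set a' := (U' :&: A)%VS; set X := (a + B)%VS.
have h1 := dimv_sum_cap U a'.
have h2 : (\dim (U + a')%VS <= \dim U')%N by apply: dimvS; rewrite subv_add sUU' capvSl.
have h3 : (\dim (U :&: a')%VS <= \dim a)%N by apply/dimvS/capvS; rewrite ?capvSr.
have h4 := dimv_sum_cap a' X.
have h5 : (\dim (a' + B)%VS <= \dim (a' + X)%VS)%N by apply/dimvS/addvS; rewrite ?addvSr.
have h6 : (\dim a <= \dim (a' :&: X)%VS)%N.
  by apply: dimvS; rewrite subv_cap addvSl andbT capvS.
have h7 := dimvS sUU'; lia.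
Qed.

Section LieAlgebra.
Variables (F : fieldType) (L : vectType F) (br : L -> L -> L).
Hypothesis hlie : is_lie_bracket br.

Definition adf (x : L) : L -> L := br x.
Lemma adf_linear x : linear (adf x).
Proof. by case: hlie => _ h _ _ a u v; rewrite /adf h. Qed.
HB.instance Definition _ x :=
  GRing.isLinear.Build F L L *:%R (adf x) (adf_linear x).
Definition ad x : 'End(L) := linfun (adf x).
Lemma adE x y : ad x y = br x y. Proof. by rewrite lfunE. Qed.

Lemma brDr x u v : br x (u + v) = br x u + br x v.
Proof. by rewrite -!adE linearD. Qed.
Lemma brDl x u v : br (u + v) x = br u x + br v x.
Proof. by case: hlie => h _ _ _; have := h 1 u v x; rewrite !scale1r. Qed.
Lemma br0r x : br x 0 = 0.
Proof. by rewrite -adE linear0. Qed.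
Lemma br_anticomm x y : br y x = - br x y.
Proof.
case: hlie => _ _ brxx _; have := brxx (x + y).
rewrite brDl !brDr brxx brxx add0r addr0 => /eqP; rewrite addr_eq0 => /eqP ->.
by rewrite opprK.
Qed.
Lemma br_jacobi x y z : br x (br y z) = - (br y (br z x) + br z (br x y)).
Proof. case: hlie => _ _ _ jac; apply/eqP; rewrite -addr_eq0 addrA; exact/eqP/jac. Qed.

Lemma lfun_memv_span (f : 'End(L)) (S : seq L) (W : {vspace L}) u :
  {in S, forall s, f s \in W} -> u \in <<S>>%VS -> f u \in W.
Proof.
move=> fSW Su; have : f u \in (f @: <<S>>)%VS by apply: memv_img.
rewrite limg_span; apply/subvP/span_subvP => _ /mapP [s Ss ->]; exact: fSW.
Qed.

Lemma mem_lie_prod (U V : {vspace L}) u v :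
  u \in U -> v \in V -> br u v \in lie_prod br U V.
Proof.
move=> Uu Vv.
have brbV b : b \in (vbasis U : seq L) -> br b v \in lie_prod br U V.
  move=> Ub; rewrite -adE; apply: (lfun_memv_span (S := vbasis V)).
    by move=> c Vc; rewrite adE memv_span ?allpairs_f.
  by rewrite (span_basis (vbasisP V)).
rewrite br_anticomm memvN -adE; apply: (lfun_memv_span (S := vbasis U)).
  by move=> b Ub; rewrite adE br_anticomm memvN brbV.
by rewrite (span_basis (vbasisP U)).
Qed.

Lemma lie_prod_subv (U V W : {vspace L}) :
  (forall u v, u \in U -> v \in V -> br u v \in W) -> (lie_prod br U V <= W)%VS.
Proof.
move=> brUVW; apply/span_subvP => _ /allpairsP [[u v] [Uu Vv ->]].
by apply: brUVW; apply: vbasis_mem.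
Qed.

Lemma ideal_brr (I : {vspace L}) x u : is_ideal br I -> u \in I -> br x u \in I.
Proof. by case=> _ brI; apply: brI; apply: memvf. Qed.
Lemma ideal_brl (I : {vspace L}) x u : is_ideal br I -> u \in I -> br u x \in I.
Proof. by move=> idI Iu; rewrite br_anticomm memvN ideal_brr. Qed.
Lemma ideal_intro (I : {vspace L}) :
  (forall x u, u \in I -> br x u \in I) -> is_ideal br I.
Proof. by move=> brI; split=> [|x u _]; [apply: subvf | apply: brI]. Qed.

Lemma ideal0 : is_ideal br 0%VS.
Proof. by apply: ideal_intro => x u; rewrite memv0 => /eqP ->; rewrite br0r mem0v. Qed.
Lemma idealT : is_ideal br fullv.
Proof. by apply: ideal_intro => x u _; apply: memvf. Qed.
Lemma ideal_add (I J : {vspace L}) :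
  is_ideal br I -> is_ideal br J -> is_ideal br (I + J)%VS.
Proof.
move=> idI idJ; apply: ideal_intro => x _ /memv_addP [u Iu [v Jv ->]].
by rewrite brDr; apply: memv_add; apply: ideal_brr.
Qed.

Lemma lie_prod_ideal (I J : {vspace L}) :
  is_ideal br I -> is_ideal br J -> is_ideal br (lie_prod br I J).
Proof.
move=> idI idJ; apply: ideal_intro => x p IJp; rewrite -adE.
apply: (lfun_memv_span _ IJp) => _ /allpairsP [[u v] [Iu Jv ->]] /=.
move: Iu Jv => /= /vbasis_mem Iu /vbasis_mem Jv.
rewrite adE br_jacobi memvN memvD //; first by rewrite mem_lie_prod ?ideal_brl.
by rewrite br_anticomm memvN mem_lie_prod ?ideal_brr.
Qed.

Lemma ideal_subalgebra (I : {vspace L}) : is_ideal br I -> is_subalgebra br I.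
Proof. by move=> idI u v _; apply: ideal_brr. Qed.

Lemma subalgebra_add_ideal (M I : {vspace L}) :
  is_subalgebra br M -> is_ideal br I -> is_subalgebra br (M + I)%VS.
Proof.
move=> subM idI _ _ /memv_addP [a Ma [u Iu ->]] /memv_addP [b Mb [v Iv ->]].
rewrite brDl brDr -addrA; apply: memv_add; first exact: subM.
by apply: memvD; [apply: ideal_brr | apply: ideal_brl].
Qed.

Lemma maximal_add_ideal (M I : {vspace L}) : is_maximal_subalgebra br M ->
  is_ideal br I -> ~~ (I <= M)%VS -> (M + I)%VS = fullv.
Proof.
case=> subM _ maxM idI IM.
case: (maxM _ (subalgebra_add_ideal subM idI) (addvSl _ _)) => // MIM.
by move: IM; rewrite -MIM addvSr.
Qed.

Lemma strict_core_subv (X K : {vspace L}) : is_strict_core br X K -> (K <= X)%VS.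
Proof. by case=> _; apply => I _ IX _. Qed.

(* The least upper bound [K] of a family of ideals is again an ideal: for each
   [x], the subspace [K :&: ad x @^-1: K] is also an upper bound. *)
Lemma strict_core_ideal (X K : {vspace L}) : is_strict_core br X K -> is_ideal br K.
Proof.
case=> ubK leastK; apply: ideal_intro => x u Ku.
suff /subvP/(_ u Ku) : (K <= K :&: (ad x @^-1: K))%VS.
  by rewrite memv_cap -memv_preim adE => /andP [].
apply: leastK => I idI IX IneX; rewrite subv_cap ubK //=.
apply/subvP => y Iy; rewrite -memv_preim adE.
by apply: (subvP (ubK I idI IX IneX)); apply: ideal_brr.
Qed.

Lemma exists_minimal_ideal (B T : {vspace L}) :
  is_ideal br B -> is_ideal br T -> (B <= T)%VS -> B != T ->
  exists A, [/\ is_ideal br A, (B <= A)%VS, (A <= T)%VS, A != B &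
    forall X, is_ideal br X -> (B <= X)%VS -> (X <= A)%VS -> X = B \/ X = A].
Proof.
move=> idB; move: {2}(\dim T) (leqnn (\dim T)) => n.
elim: n T => [|n IH] T dT idT BT BneT.
  by move: BneT; rewrite eqEdim BT (leq_trans dT (leq0n _)).
case: (classic (exists X, [/\ is_ideal br X, (B <= X)%VS, (X <= T)%VS,
                              X != B & X != T])) => [[X [idX BX XT XneB XneT]]|].
  have dX : (\dim X <= n)%N.
    by move: XneT; rewrite eqEdim XT /= -ltnNge; lia.
  have BneX : B != X by rewrite eq_sym.
  have [A [idA BA AX AneB minA]] := IH X dX idX BX BneX.
  by exists A; split; rewrite // (subv_trans AX).
move=> noX; exists T; split; rewrite // 1?eq_sym // => X idX BX XT.
case: (eqVneq X B) => [|XneB]; [by left | right].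
by case: (eqVneq X T) => // XneT; case: noX; exists X.
Qed.

(* [supersolvable br] is by definition [ideal_chain 0 fullv]. *)
Definition ideal_chain (B Z : {vspace L}) : Prop :=
  exists (n : nat) (f : nat -> {vspace L}),
    [/\ f 0%N = B, f n = Z,
        forall i, (i <= n)%N -> is_ideal br (f i)
      & forall i, (i < n)%N -> (f i <= f i.+1)%VS /\ \dim (f i.+1) = (\dim (f i)).+1].

Lemma ideal_chain_refl Z : is_ideal br Z -> ideal_chain Z Z.
Proof. by move=> idZ; exists 0%N, (fun _ => Z); split. Qed.

Lemma ideal_chain_cons B D Z : is_ideal br B -> (B <= D)%VS ->
  \dim D = (\dim B).+1 -> ideal_chain D Z -> ideal_chain B Z.
Proof.
move=> idB BD dD [n [f [f0 fn idf fS]]].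
exists n.+1, (fun i => if i is k.+1 then f k else B); split=> // [[|i]|[|i]] //=.
- exact: idf.
- by rewrite f0.
- exact: fS.
Qed.

Section NilpotentSupplement.
Variable N : {vspace L}.
Hypotheses (idN : is_ideal br N) (nilN : is_nilpotent br N).

Lemma lie_prod_nilpotent_subv (A B : {vspace L}) : is_ideal br B ->
  (A <= lie_prod br N A + B)%VS -> (lie_prod br N A <= B)%VS.
Proof.
move=> idB ANAB.
have NA_lcs k : (lie_prod br N A <= lcs br N k + B)%VS.
  elim: k => [|k IH].
    by apply: subv_trans (addvSl _ _); apply: lie_prod_subv => u v Nu _; apply: ideal_brl.
  apply: lie_prod_subv => n a Nn Aa.
  have /memv_addP [p Np [b Bb ->]] : a \in (lcs br N k + B)%VS.
    by apply: (subvP (subv_trans ANAB _)) Aa; rewrite subv_add IH addvSr.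
  by rewrite brDr; apply: memv_add; [apply: mem_lie_prod | apply: ideal_brr].
by case: nilN => k lcs0; have := NA_lcs k; rewrite lcs0 add0v.
Qed.

Lemma lie_prod_minimal_ideal_subv (A B : {vspace L}) :
  is_ideal br A -> is_ideal br B -> (B <= A)%VS ->
  (forall X, is_ideal br X -> (B <= X)%VS -> (X <= A)%VS -> X = B \/ X = A) ->
  (lie_prod br N A <= B)%VS.
Proof.
move=> idA idB BA minA.
have idNAB := ideal_add (lie_prod_ideal idN idA) idB.
have NAA : (lie_prod br N A <= A)%VS.
  by apply: lie_prod_subv => u v _; apply: ideal_brr.
case: (minA _ idNAB (addvSr _ _)) => [|NABB|NABA]; first by rewrite subv_add NAA.
  by rewrite -NABB addvSl.
by apply: lie_prod_nilpotent_subv; rewrite // NABA.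
Qed.

Variable M : {vspace L}.
Hypothesis MN_full : (M + N)%VS = fullv.

Lemma cap_add_ideal (U A B : {vspace L}) : is_ideal_in br M U ->
  is_ideal br A -> is_ideal br B -> (lie_prod br N A <= B)%VS ->
  is_ideal br (U :&: A + B)%VS.
Proof.
case=> _ brMU idA idB NAB; apply: ideal_intro => x _ /memv_addP [w UAw [b Bb ->]].
have /memv_addP [a Ma [n Nn ->]] : x \in (M + N)%VS by rewrite MN_full memvf.
move: UAw; rewrite memv_cap => /andP [Uw Aw].
rewrite brDr brDl -addrA; apply: memv_add; first by rewrite memv_cap brMU ?ideal_brr.
by apply: memvD; [apply: (subvP NAB); apply: mem_lie_prod | apply: ideal_brr].
Qed.

Hypothesis ssM : supersolvable_sub br M.

Lemma ideal_succ_between (B T : {vspace L}) :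
  is_ideal br B -> is_ideal br T -> (B <= T)%VS -> B != T -> (T <= M + B)%VS ->
  exists D, [/\ is_ideal br D, (B <= D)%VS, (D <= T)%VS & \dim D = (\dim B).+1].
Proof.
move=> idB idT BT BneT TMB.
have [A [idA BA AT AneB minA]] := exists_minimal_ideal idB idT BT BneT.
have NAB := lie_prod_minimal_ideal_subv idA idB BA minA.
case: ssM => m [f [f0 fm idf fS]].
pose X i := (f i :&: A + B)%VS.
have idX i : (i <= m)%N -> is_ideal br (X i).
  by move=> im; apply: cap_add_ideal => //; apply: idf.
have X0 : X 0%N = B by rewrite /X f0 cap0v add0v.
have Xm : X m = A.
  rewrite /X fm; apply/eqP; rewrite eqEsubv subv_add BA capvSr /=.
  apply/subvP => a Aa.
  have /memv_addP [u Mu [b Bb ab]] := subvP (subv_trans AT TMB) a Aa.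
  rewrite ab; apply: memv_add => //.
  by rewrite memv_cap Mu -[u](addrK b) -ab memvB // (subvP BA).
have dBA : (\dim B < \dim A)%N.
  by move: AneB; rewrite eq_sym eqEdim BA /= -ltnNge.
have [i im dXi] : exists2 i, (i < m)%N & \dim (X i.+1) = (\dim B).+1.
  apply: (nat_step_up (d := fun i => \dim (X i))); first by rewrite /= X0 Xm leqnn.
  move=> j jm; have [fjj1 dfj] := fS j jm.
  by have := dimv_cap_add_le A B fjj1; rewrite /X dfj; lia.
exists (X i.+1); split=> //; first exact: idX.
  exact: addvSr.
by apply: subv_trans AT; rewrite subv_add BA capvSr.
Qed.

Lemma ideal_chain_from (T Z : {vspace L}) : is_ideal br T -> ideal_chain T Z ->
  forall B, is_ideal br B -> (B <= T)%VS -> (T <= M + B)%VS -> ideal_chain B Z.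
Proof.
move=> idT chTZ B; move: {2}(\dim T - \dim B)%N (leqnn (\dim T - \dim B)%N) => k.
elim: k B => [|k IH] B dTB idB BT TMB.
  suff -> : B = T by [].
  by apply/eqP; rewrite eqEdim BT /=; lia.
case: (eqVneq B T) => [-> //|BneT].
have [D [idD BD DT dD]] := ideal_succ_between idB idT BT BneT TMB.
apply: (ideal_chain_cons idB BD dD); apply: IH => //.
- by have := dimvS DT; lia.
- by apply: subv_trans TMB _; apply: addvS.
Qed.

End NilpotentSupplement.

Lemma strict_core_completion_subv (M C K : {vspace L}) :
  is_completion br M C -> is_strict_core br C K -> (K <= M)%VS.
Proof.
case=> _ _ complC [_ leastK]; apply: leastK => I idI IC IneC.
exact: complC (ideal_subalgebra idI) IC IneC idI.
Qed.

End LieAlgebra.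

Theorem theorem2p9 (F : fieldType) (L : vectType F) (br : L -> L -> L)
    (hlie : is_lie_bracket br)
    (M : {vspace L}) (hM : is_maximal_subalgebra br M)
    (hMss : supersolvable_sub br M)
    (heta : ideal_index_is br M 1)
    (N : {vspace L}) (hN : is_nilradical br N)
    (hNM : ~~ (N <= M)%VS) :
  supersolvable br.
Proof.
have [C [K [[complC idC] coreK dCK]]] := heta.
have [_ CM _] := complC.
have [idN nilN _] := hN.
have MN := maximal_add_ideal hlie hM idN hNM.
have MC := maximal_add_ideal hlie hM idC CM.
have KC := strict_core_subv coreK.
have idK := strict_core_ideal hlie coreK.
have KM := strict_core_completion_subv complC coreK.
have dC : \dim C = (\dim K).+1 by have := dimvS KC; lia.
have idL := idealT br.
have chCL : ideal_chain br C fullv.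
  apply: (ideal_chain_from hlie idN nilN MN hMss idL (ideal_chain_refl idL)) => //.
  - exact: subvf.
  - by rewrite MC.
have chKL := ideal_chain_cons idK KC dC chCL.
apply: (ideal_chain_from hlie idN nilN MN hMss idK chKL); first exact: ideal0.
- exact: sub0v.
- by rewrite addv0.
Qed.
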